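(* In the game $\mathrm{CN}(7,4)$, if $\mathbf p\notin S$ and exactly one stack of $\mathbf p$ has height $0$, then there is a legal move from $\mathbf p$ to some $\mathbf p'\in S$. Here, writing a position as $(a,b,c,d,e,f,g)$ with $a$ a minimum entry, $S_1=\{a=b=0,\ c=g>0,\ d+e+f=c\}$, $S_2=\{a=b=c=d=e=f=g\}$, $S_3=\{a=b,\ c=g,\ d=f,\ a+c=d+e,\ 0<a<e\}$, $S_4=\{a=f,\ b+c=d+e=g+a,\ a<\min\{b,e\},\ a<\max\{c,d\}\}$, and $S=S_1\cup S_2\cup S_3\cup S_4$.
   Context: Circular Nim $\mathrm{CN}(7,4)$: $7$ stacks of tokens are arranged in a circle; a position is a vector $(p_1,\dots,p_7)$ of nonnegative integers giving the stack heights in order around the circle, determined only up to rotation and reflection. A legal move consists of choosing $4$ cyclically consecutive stacks and removing at least one token from at least one of these $4$ stacks (any number from each chosen stack; other stacks unchanged). A position belongs to $S_i$ if some rotation and/or reflection $(a,b,c,d,e,f,g)$ of it with $a$ equal to the minimum entry satisfies the conditions defining $S_i$. *)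

From mathcomp Require Import all_boot.
Set Implicit Arguments. Unset Strict Implicit. Unset Printing Implicit Defensive.

(* A position of CN(7,4): stack heights indexed by 'I_7, in cyclic order. *)
Definition pos := 'I_7 -> nat.

Definition idx (n : nat) : 'I_7 := inord (n %% 7).

Definition dsym (k : nat) (r : bool) (p : pos) : pos :=
  fun i => p (idx (if r then k + 7 - i else k + i)).

Definition S1c (a b c d e f g : nat) : Prop :=
  a = 0 /\ b = 0 /\ c = g /\ 0 < c /\ d + e + f = c.
Definition S2c (a b c d e f g : nat) : Prop :=
  a = b /\ b = c /\ c = d /\ d = e /\ e = f /\ f = g.
Definition S3c (a b c d e f g : nat) : Prop :=
  a = b /\ c = g /\ d = f /\ a + c = d + e /\ 0 < a /\ a < e.
Definition S4c (a b c d e f g : nat) : Prop :=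
  a = f /\ b + c = d + e /\ d + e = g + a /\ a < minn b e /\ a < maxn c d.

(* Membership in S_i: some rotation/reflection (a,...,g) with a the minimum
   entry satisfies the condition. *)
Definition inSi (C : nat -> nat -> nat -> nat -> nat -> nat -> nat -> Prop)
  (p : pos) : Prop :=
  exists (k : nat) (r : bool),
    let q := dsym k r p in
    (forall i : 'I_7, q (idx 0) <= q i) /\
    C (q (idx 0)) (q (idx 1)) (q (idx 2)) (q (idx 3)) (q (idx 4))
      (q (idx 5)) (q (idx 6)).

Definition inS (p : pos) : Prop :=
  inSi S1c p \/ inSi S2c p \/ inSi S3c p \/ inSi S4c p.

(* Legal move of CN(7,4): choose 4 cyclically consecutive stacks
   j, j+1, j+2, j+3 (mod 7), remove tokens only from those, at least one. *)
Definition legal_move (p p' : pos) : Prop :=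
  exists j : nat,
    (forall i : 'I_7, p' i <= p i) /\
    (forall i : 'I_7, (forall t, t < 4 -> i != idx (j + t)) -> p' i = p i) /\
    (exists i : 'I_7, p' i < p i).

(* A position with exactly one empty stack is, up to rotation and reflection,
   (0, x1, ..., x6) with all xi > 0 and x1 <= x6.  A case analysis on a few
   linear inequalities between the xi always exhibits a move into S: one
   emptying stacks 3 and 4, or stack 1, which leads into S1, or one emptying
   stack 5, which leads into S4.  The reduction to this normal form is sound
   because dihedral maps of the circle send windows of 4 consecutive stacks to
   such windows and preserve S. *)

From mathcomp Require Import all_boot zify.

Definition reach_S (p : pos) : Prop := exists p', legal_move p p' /\ inS p'.

Definition dmap (k : nat) (r : bool) (i : 'I_7) : 'I_7 :=
  idx (if r then k + 7 - i else k + i).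

Lemma dsymE k r p i : dsym k r p i = p (dmap k r i).
Proof. by []. Qed.

Lemma idx_val n : idx n = n %% 7 :> nat.
Proof. by rewrite /= inordK // ltn_mod. Qed.

Lemma idx_eq m n : m %% 7 = n %% 7 -> idx m = idx n.
Proof. by move=> e; apply: val_inj => /=; rewrite !idx_val e. Qed.

Lemma dmap_id i : dmap 0 false i = i.
Proof. by apply: val_inj => /=; rewrite /dmap idx_val (modn_small (ltn_ord i)). Qed.

Lemma dmap_ldiv k r k0 r0 :
  exists k' r', forall i, dmap k r (dmap k' r' i) = dmap k0 r0 i.
Proof.
exists (if r then k + 7 - k0 %% 7 else k0 + 7 - k %% 7), (r (+) r0) => i.
apply: idx_eq; rewrite /dmap idx_val; have := ltn_ord i.
by case: r; case: r0 => /=; lia.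
Qed.

Lemma dmap_window k r j :
  exists j', forall i t, t < 4 -> dmap k r i = idx (j + t) ->
    exists2 t', t' < 4 & i = idx (j' + t').
Proof.
exists (if r then k + 11 - j %% 7 else j + 7 - k %% 7) => i t lt_t4.
move/(congr1 (@nat_of_ord 7)); rewrite /dmap !idx_val => e.
exists (if r then 3 - t else t); first by case: r {e}; lia.
apply: val_inj => /=; rewrite idx_val; have := ltn_ord i.
by case: r e => /=; lia.
Qed.

Lemma legal_move_dsym k r q q' :
  legal_move q q' -> legal_move (dsym k r q) (dsym k r q').
Proof.
case=> j [le_q'q [out_j [i0 lt_i0]]]; have [j' win] := dmap_window k r j.
exists j'; split; [|split].
- by move=> i; apply: le_q'q.
- move=> i out_j'; apply: out_j => t lt_t4; apply/eqP => e.
  have [t' lt_t'4 ei] := win i t lt_t4 e.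
  by move: (out_j' t' lt_t'4); rewrite ei eqxx.
- have [k' [r' inv]] := dmap_ldiv k r 0 false.
  by exists (dmap k' r' i0); rewrite !dsymE inv dmap_id.
Qed.

Definition frame_sat (C : nat -> nat -> nat -> nat -> nat -> nat -> nat -> Prop)
    (q : pos) : Prop :=
  (forall i, q (idx 0) <= q i) /\
  C (q (idx 0)) (q (idx 1)) (q (idx 2)) (q (idx 3)) (q (idx 4)) (q (idx 5)) (q (idx 6)).

Lemma frame_sat_eq {C q1 q2} : q1 =1 q2 -> frame_sat C q1 -> frame_sat C q2.
Proof. by move=> e [min_q1 Cq1]; split; [move=> i; rewrite -!e | rewrite -!e]. Qed.

Lemma inSi_dsym C k r q : inSi C q -> inSi C (dsym k r q).
Proof.
case=> k0 [r0 sat0]; have [k' [r' comp]] := dmap_ldiv k r k0 r0.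
by exists k', r'; apply: frame_sat_eq sat0 => i; rewrite !dsymE comp.
Qed.

Lemma inS_dsym k r q : inS q -> inS (dsym k r q).
Proof.
by case=> [|[|[|]]] q_in; [left | right; left | do 2 right; left | do 3 right];
  apply: inSi_dsym.
Qed.

Lemma reach_S_eq {p q} : p =1 q -> reach_S p -> reach_S q.
Proof.
move=> e [p' [[j [le_p'p [out_j lt_p'p]]] p'_in]]; exists p'; split=> //.
exists j; split; [|split].
- by move=> i; rewrite -e.
- by move=> i /out_j; rewrite -e.
- by case: lt_p'p => i; exists i; rewrite -e.
Qed.

Lemma reach_S_dsym k r q : reach_S q -> reach_S (dsym k r q).
Proof.
case=> q' [mv q'_in]; exists (dsym k r q'); split.
  exact: legal_move_dsym.
exact: inS_dsym.
Qed.

Lemma reach_S_dsymV k r q : reach_S (dsym k r q) -> reach_S q.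
Proof.
have [k' [r' inv]] := dmap_ldiv k r 0 false.
move/(reach_S_dsym k' r'); apply: reach_S_eq => i.
by rewrite !dsymE inv dmap_id.
Qed.

Definition pos_of (s : seq nat) : pos := fun i => nth 0 s i.

Lemma legal_move_pos_of j s t : j < 7 ->
  (forall m, m < 7 -> nth 0 t m <= nth 0 s m) ->
  (forall m, m < 7 -> 3 < (m + 7 - j) %% 7 -> nth 0 t m = nth 0 s m) ->
  (exists2 m, m < 7 & nth 0 t m < nth 0 s m) ->
  legal_move (pos_of s) (pos_of t).
Proof.
move=> lt_j7 le_ts out_j [m lt_m7 lt_tsm]; exists j; split; [|split].
- by move=> i; apply: le_ts.
- move=> i out_i; apply: out_j => //; rewrite ltnNge; apply/negP => in_j.
  have /eqP := out_i _ in_j; apply; apply: val_inj => /=.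
  by rewrite idx_val; have := ltn_ord i; lia.
- by exists (Ordinal lt_m7).
Qed.

Definition read_from (k : nat) (r : bool) (s z : seq nat) : Prop :=
  forall m, m < 7 -> nth 0 z m = nth 0 s ((if r then k + 7 - m else k + m) %% 7).

Lemma dsym_pos_of k r s z : read_from k r s z -> pos_of z =1 dsym k r (pos_of s).
Proof. by move=> frame i; rewrite dsymE /pos_of /dmap idx_val frame. Qed.

Lemma inSi_pos_of C k r t z :
  read_from k r t z ->
  (forall m, nth 0 z 0 <= nth 0 z m) ->
  C (nth 0 z 0) (nth 0 z 1) (nth 0 z 2) (nth 0 z 3) (nth 0 z 4) (nth 0 z 5) (nth 0 z 6) ->
  inSi C (pos_of t).
Proof.
move=> /dsym_pos_of frame min_z Cz; exists k, r.
by apply: (frame_sat_eq frame); split=> [i|]; rewrite /pos_of ?idx_val.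
Qed.

Lemma inS_S1 k r {t} c d e f :
  read_from k r t [:: 0; 0; c; d; e; f; c] ->
  0 < c -> d + e + f = c -> inS (pos_of t).
Proof. by move=> frame c_gt0 def_c; left; apply: inSi_pos_of frame _ _. Qed.

Lemma inS_S4 k r {t} b c d e g :
  read_from k r t [:: 0; b; c; d; e; 0; g] ->
  0 < b -> 0 < e -> 0 < maxn c d -> b + c = d + e -> d + e = g -> inS (pos_of t).
Proof.
move=> frame b_gt0 e_gt0 cd_gt0 bc de; do 3 right.
by apply: inSi_pos_of frame _ _ => //=; rewrite /S4c; lia.
Qed.

Ltac case_lt7 := case=> [|[|[|[|[|[|[|?]]]]]]] //=.

Section OneEmptyStack.

Variables x1 x2 x3 x4 x5 x6 : nat.
Hypotheses (x1_gt0 : 0 < x1) (x2_gt0 : 0 < x2) (x3_gt0 : 0 < x3)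
  (x4_gt0 : 0 < x4) (x5_gt0 : 0 < x5) (x6_gt0 : 0 < x6).

Local Notation w := (pos_of [:: 0; x1; x2; x3; x4; x5; x6]).

(* In [reach_S_emptyX_winj] the move uses the window of stacks j, ..., j + 3
   and empties the stacks of w listed in X. *)

Lemma reach_S_empty34_win1 : x6 <= x5 <= x2 -> x5 <= x1 + x6 -> reach_S w.
Proof.
move=> le_x5 le_x16; exists (pos_of [:: 0; x5 - x6; x5; 0; 0; x5; x6]); split.
  by apply: (legal_move_pos_of 1) => //; [case_lt7; lia | case_lt7 | exists 3].
by apply: (inS_S1 4 true x5 (x5 - x6) 0 x6); [case_lt7 | lia..].
Qed.

Lemma reach_S_empty34_win2 : x1 + x6 <= x2 -> x1 + x6 <= x5 -> reach_S w.
Proof.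
move=> le_x2 le_x5; exists (pos_of [:: 0; x1; x1 + x6; 0; 0; x1 + x6; x6]); split.
  by apply: (legal_move_pos_of 2) => //; [case_lt7; lia | case_lt7 | exists 3].
by apply: (inS_S1 3 false (x1 + x6) x6 0 x1); [case_lt7 | lia..].
Qed.

Lemma reach_S_empty34_win3 : x1 <= x2 <= x5 -> x2 <= x1 + x6 -> reach_S w.
Proof.
move=> le_x2 le_x16; exists (pos_of [:: 0; x1; x2; 0; 0; x2; x2 - x1]); split.
  by apply: (legal_move_pos_of 3) => //; [case_lt7; lia | case_lt7 | exists 3].
by apply: (inS_S1 3 false x2 (x2 - x1) 0 x1); [case_lt7 | lia..].
Qed.

Lemma reach_S_empty34 : x1 <= x2 -> x6 <= x5 -> reach_S w.
Proof.
move=> le_x12 le_x65; case: (leqP (x1 + x6) (minn x2 x5)) => [le_min | lt_min].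
  by apply: reach_S_empty34_win2; lia.
case: (leqP x5 x2) => le_x52.
  by apply: reach_S_empty34_win1; lia.
by apply: reach_S_empty34_win3; lia.
Qed.

Lemma reach_S_empty1_win1 : x5 <= x6 <= x2 -> x6 <= x3 + x4 + x5 -> reach_S w.
Proof.
move=> le_x6 le_x345; set m := minn (x6 - x5) x3.
exists (pos_of [:: 0; 0; x6; m; x6 - x5 - m; x5; x6]); split.
  by apply: (legal_move_pos_of 1) => //; [case_lt7; lia | case_lt7 | exists 1].
by apply: (inS_S1 0 false x6 m (x6 - x5 - m) x5); [case_lt7 | lia..].
Qed.

Lemma reach_S_empty1_win5 : x3 + x4 <= x2 <= x6 -> x2 <= x3 + x4 + x5 -> reach_S w.
Proof.
move=> le_x2 le_x345; exists (pos_of [:: 0; 0; x2; x3; x4; x2 - (x3 + x4); x2]); split.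
  by apply: (legal_move_pos_of 5) => //; [case_lt7; lia | case_lt7 | exists 1].
by apply: (inS_S1 0 false x2 x3 x4 (x2 - (x3 + x4))); [case_lt7 | lia..].
Qed.

Lemma reach_S_empty1_win6 : x3 + x4 + x5 <= x2 -> x3 + x4 + x5 <= x6 -> reach_S w.
Proof.
move=> le_x2 le_x6; set c := x3 + x4 + x5.
exists (pos_of [:: 0; 0; c; x3; x4; x5; c]); split.
  by apply: (legal_move_pos_of 6) => //; [case_lt7; lia | case_lt7 | exists 1].
by apply: (inS_S1 0 false c x3 x4 x5); [case_lt7 | lia..].
Qed.

Lemma reach_S_empty1 : x3 + x4 <= x2 -> minn x2 x5 <= x6 -> reach_S w.
Proof.
move=> le_x2 le_x6; case: (leqP (x3 + x4 + x5) (minn x2 x6)) => [le_min | lt_min].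
  by apply: reach_S_empty1_win6; lia.
case: (leqP x2 x6) => le_x26.
  by apply: reach_S_empty1_win5; lia.
by apply: reach_S_empty1_win1; lia.
Qed.

Lemma reach_S_empty5_win2 :
  x1 <= x6 <= x1 + x2 -> x6 <= x3 + x4 -> 1 < x6 -> reach_S w.
Proof.
move=> le_x6 le_x34 x6_gt1; set e := minn x4 (x6 - 1).
exists (pos_of [:: 0; x1; x6 - x1; x6 - e; e; 0; x6]); split.
  by apply: (legal_move_pos_of 2) => //; [case_lt7; lia | case_lt7 | exists 5].
by apply: (inS_S4 0 false x1 (x6 - x1) (x6 - e) e x6); [case_lt7 | lia..].
Qed.

Lemma reach_S_empty5_win3 : x1 + x2 <= x6 -> x1 + x2 <= x3 + x4 -> reach_S w.
Proof.
move=> le_x6 le_x34; set b := minn x4 (x1 + x2).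
exists (pos_of [:: 0; x1; x2; x1 + x2 - b; b; 0; x1 + x2]); split.
  by apply: (legal_move_pos_of 3) => //; [case_lt7; lia | case_lt7 | exists 5].
by apply: (inS_S4 5 true b (x1 + x2 - b) x2 x1 (x1 + x2)); [case_lt7 | lia..].
Qed.

Lemma reach_S_empty5_win5 : x3 + x4 <= x6 -> x2 < x3 + x4 <= x1 + x2 -> reach_S w.
Proof.
move=> le_x6 lt_x34; set g := x3 + x4.
exists (pos_of [:: 0; g - x2; x2; x3; x4; 0; g]); split.
  by apply: (legal_move_pos_of 5) => //; [case_lt7; lia | case_lt7 | exists 5].
by apply: (inS_S4 0 false (g - x2) x2 x3 x4 g); [case_lt7 | lia..].
Qed.

Lemma reach_S_one_empty_le : x1 <= x6 -> reach_S w.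
Proof.
move=> le_x16; case: (leqP x6 (x3 + x4)) => [le_x6_34 | lt_34_x6].
  case: (leqP x6 (x1 + x2)) => [le_x6_12 | lt_12_x6].
    case: (leqP 2 x6) => [x6_gt1 | x6_le1].
      by apply: reach_S_empty5_win2; lia.
    by apply: reach_S_empty34; lia.
  by apply: reach_S_empty5_win3; lia.
case: (ltnP x2 (x3 + x4)) => [lt_x2_34 | le_34_x2].
  case: (leqP (x3 + x4) (x1 + x2)) => [le_34_12 | lt_12_34].
    by apply: reach_S_empty5_win5; lia.
  by apply: reach_S_empty5_win3; lia.
case: (leqP (minn x2 x5) x6) => [le_min_x6 | lt_x6_min].
  exact: reach_S_empty1.
by apply: reach_S_empty34; lia.
Qed.

End OneEmptyStack.

Lemma reach_S_one_empty x1 x2 x3 x4 x5 x6 :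
  0 < x1 -> 0 < x2 -> 0 < x3 -> 0 < x4 -> 0 < x5 -> 0 < x6 ->
  reach_S (pos_of [:: 0; x1; x2; x3; x4; x5; x6]).
Proof.
move=> x1_gt0 x2_gt0 x3_gt0 x4_gt0 x5_gt0 x6_gt0.
case: (leqP x1 x6) => [le_x16 | lt_x61]; first exact: reach_S_one_empty_le.
apply: (reach_S_dsymV 0 true).
apply: (reach_S_eq (p := pos_of [:: 0; x6; x5; x4; x3; x2; x1])).
  by apply: dsym_pos_of; case_lt7.
by apply: reach_S_one_empty_le => //; exact: ltnW.
Qed.

Lemma pos_of_values (q : pos) :
  pos_of [:: q (idx 0); q (idx 1); q (idx 2); q (idx 3);
             q (idx 4); q (idx 5); q (idx 6)] =1 q.
Proof.
by case=> [[|[|[|[|[|[|[|m]]]]]]] lt_i7] //; rewrite /pos_of /=; congr q;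
  apply: val_inj => /=; rewrite idx_val.
Qed.

Theorem lemma3 (p : pos) :
  ~ inS p -> #|[pred i : 'I_7 | p i == 0]| = 1 ->
  exists p' : pos, legal_move p p' /\ inS p'.
Proof.
move=> _ /mem_card1[i0 zeroE].
have p_eq0 i : (p i == 0) = (i == i0) by have := zeroE i; rewrite !inE.
apply: (reach_S_dsymV i0 false); set q := dsym i0 false p.
have q_eq0 m : m < 7 -> (q (idx m) == 0) = (m == 0).
  move=> lt_m7; rewrite /q dsymE p_eq0; have lt_i07 := ltn_ord i0.
  apply/eqP/eqP => [/(congr1 (@nat_of_ord 7)) | ->].
    by rewrite /dmap !idx_val; lia.
  by apply: val_inj => /=; rewrite /dmap !idx_val; lia.
apply: reach_S_eq (pos_of_values q) _.
have /eqP -> : q (idx 0) == 0 by rewrite q_eq0.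
by apply: reach_S_one_empty; rewrite lt0n q_eq0.
Qed.
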